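(* Let $p$ be a prime, $\Phi:\mathbb{N}\to\mathbb{N}$ strictly increasing, and $f\in\mathcal{F}(\Phi)$. Let $h,n_0,u$ be nonnegative integers with $u<p^{1+\Phi(n_0)}$ and $f(u)\equiv 0\pmod{p^{1+h+n_0}}$. Suppose there is a sequence $(S(n))_{n\ge n_0}$ of sets of integers with $S(n)\subset\big(0,p^{\Phi(n+1)-\Phi(n)}\big)$ and $\operatorname{Card} S(n)=p-1$, such that for all nonnegative integers $n,m$ with $n\ge n_0$, $m<p^{1+\Phi(n)}$ and $m\equiv u\pmod{p^{1+\Phi(n_0)}}$, \[ \big\{\, b(\Phi,f;m+ip^{1+\Phi(n)}) \bmod p^{h+1} \;:\; i\in S(n)\,\big\} = \big\{\, ip^h \bmod p^{h+1} \;:\; i=1,2,\dots,p-1\,\big\}. \] Then there exists $\xi\in\mathbb{Z}_p$ such that (a) $f(\xi)=0$, (b) $\xi\equiv u\pmod{p^{1+\Phi(n_0)}}$, and (c) $\rho(\xi;n+1)\in\{0\}\cup S(n)$ for every $n\ge n_0$. If moreover $b(\Phi,f;m)\equiv 0\pmod{p^h}$ for every integer $m\ge p^{1+\Phi(n_0)}$ with $m\equiv u\pmod{p^{1+\Phi(n_0)}}$, then the $\xi\in\mathbb{Z}_p$ satisfying (a), (b), (c) is unique.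
   Context: $\mathbb{N}=\{0,1,2,\dots\}$. $v_p$, $|\cdot|_p$ are the $p$-adic valuation and absolute value ($v_p(p)=1$, $|p|_p=p^{-1}$). Each $x\in\mathbb{Z}_p$ is written $x=\sum_{i\ge0}x_ip^i$ with digits $x_i\in\{0,\dots,p-1\}$; for a nonnegative integer $m$, $m_i$ are its base-$p$ digits. Set $\Phi(-1):=-1$. $\tau(m)=\tau(\Phi;m):=\min\{h\in\mathbb{N}: m<p^{1+\Phi(h)}\}$. For $m\ge p^{1+\Phi(0)}$, $M(m):=\sum_{i=\Phi(\tau(m)-1)+1}^{\Phi(\tau(m))} m_ip^i$. $B(\Phi,f;m):=f(m)$ if $m<p^{1+\Phi(0)}$ and $B(\Phi,f;m):=f(m)-f(m-M(m))$ otherwise. $\mathcal{F}(\Phi)$ is the class of continuous $f:\mathbb{Z}_p\to\mathbb{Z}_p$ such that for every positive integer $n$ and all $x,y\in\mathbb{Z}_p$: if $|x-y|_p\le p^{-1-\Phi(n-1)}$ then $|f(x)-f(y)|_p\le p^{-n}$. For $f\in\mathcal{F}(\Phi)$ one has $v_p(B(\Phi,f;m))\ge\tau(m)$, and one sets $b(\Phi,f;m):=p^{-\tau(m)}B(\Phi,f;m)\in\mathbb{Z}_p$. For $x\in\mathbb{Z}_p$ and $j\in\mathbb{N}$, $\rho(x;j):=p^{-1-\Phi(j-1)}\sum_{i=1+\Phi(j-1)}^{\Phi(j)}x_ip^i$ (a nonnegative integer). *)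

(* p-adic integers are represented by their base-p digit
   streams x : nat -> nat (digit x i = x_i), valid when every digit is < p. *)
From mathcomp Require Import all_boot.
Set Implicit Arguments. Unset Strict Implicit. Unset Printing Implicit Defensive.

Section PadicDefs.
Variable p : nat.

Definition isZp (x : nat -> nat) : Prop := forall i, x i < p.

Definition trunc (x : nat -> nat) (k : nat) : nat := \sum_(i < k) x i * p ^ i.

Definition digit (m i : nat) : nat := m %/ p ^ i %% p.

Definition emb (m : nat) : nat -> nat := digit m.

(* subtraction in Z_p : digit i of x - y is digit i of ((x-y) mod p^(i+1)) *)
Definition zsub (x y : nat -> nat) : nat -> nat :=
  fun i => ((trunc x i.+1 + p ^ i.+1 - trunc y i.+1) %% p ^ i.+1) %/ p ^ i.

Definition zeroZp (x : nat -> nat) : Prop := forall i, x i = 0.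

Variable Phi : nat -> nat.

(* lev j = 1 + Phi(j-1), with the convention Phi(-1) = -1, so lev 0 = 0 *)
Definition lev (j : nat) : nat := if j is j'.+1 then (Phi j').+1 else 0.

(* tau(m) = min { h : m < p^(1+Phi h) } ; for Phi strictly increasing and
   p >= 2, h = m belongs to this set, so the search over 0..m is exhaustive *)
Definition tau (m : nat) : nat := find (fun h => m < p ^ (Phi h).+1) (iota 0 m.+1).

Definition Mm (m : nat) : nat :=
  \sum_(lev (tau m) <= i < (Phi (tau m)).+1) digit m i * p ^ i.

Variable f : (nat -> nat) -> (nat -> nat).

Definition Bf (m : nat) : nat -> nat :=
  if m < p ^ (Phi 0).+1 then f (emb m) else zsub (f (emb m)) (f (emb (m - Mm m))).

(* b(Phi, f; m) = p^(-tau m) B(Phi,f;m)  (a digit shift, valid as v_p(B) >= tau m) *)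
Definition bf (m : nat) : nat -> nat := fun i => Bf m (i + tau m).

Definition rho (x : nat -> nat) (j : nat) : nat :=
  \sum_(lev j <= i < (Phi j).+1) x i * p ^ (i - lev j).

Definition continuousZp : Prop :=
  forall x, isZp x -> forall n, exists k, forall y, isZp y ->
    trunc x k = trunc y k -> trunc (f x) n = trunc (f y) n.

(* f in F(Phi) : continuous Z_p -> Z_p, and for n >= 1,
   |x - y|_p <= p^(-1-Phi(n-1))  ==>  |f x - f y|_p <= p^(-n) *)
Definition classF : Prop :=
  (forall x, isZp x -> isZp (f x)) /\ continuousZp /\
  forall n, 0 < n -> forall x y, isZp x -> isZp y ->
    trunc x (lev n) = trunc y (lev n) -> trunc (f x) n = trunc (f y) n.

End PadicDefs.

From mathcomp Require Import all_boot zify.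
Set Implicit Arguments. Unset Strict Implicit. Unset Printing Implicit Defensive.

(* Let m_n be the truncation of the sought root below level 1 + Phi n.  For
   m = m_n + r p^(1+Phi n) with 0 < r < p^(Phi(n+1) - Phi n) one has
   tau(m) = n + 1, and the class F(Phi) gives f(m) = f(m_n) + p^(n+1) b(m)
   modulo p^(n+2+h).  So if f(m_n) = a p^(n+1+h) modulo p^(n+2+h), the number
   m_n + r p^(1+Phi n) is a root modulo p^(n+2+h) exactly when r = 0 = a, or
   r is in S(n) and b(m) = (p - a) p^h modulo p^(h+1); since b permutes the
   nonzero residues over S(n), exactly one r in {0} U S(n) qualifies.
   Choosing it at every level builds the root block by block.  Under the
   extra hypothesis b = 0 modulo p^h, f(m_n) = f(m_N) modulo p^(n+1+h) for
   every N >= n, so every root in question has f(m_n) = 0 modulo p^(n+1+h)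
   and must make the same unique choice of r at every level. *)

Lemma uniq_map_inj (T1 T2 : eqType) (g : T1 -> T2) (s : seq T1) :
  uniq (map g s) -> {in s &, injective g}.
Proof.
move=> U x y xs ys E.
have ei : index x s = index y s.
  apply/eqP; rewrite -(nth_uniq (g x) _ _ U) ?size_map ?index_mem //.
  by rewrite !(nth_map x) ?index_mem // !nth_index // E.
by rewrite -(nth_index x xs) -(nth_index x ys) ei.
Qed.

Section Truncation.
Variable p : nat.
Hypothesis p_gt0 : 0 < p.
Let pX_gt0 k : 0 < p ^ k. Proof. by rewrite expn_gt0 p_gt0. Qed.

Lemma mulnX_modS j k : j < p -> j * p ^ k %% p ^ k.+1 = j * p ^ k.
Proof. by move=> jp; rewrite modn_small // expnS ltn_mul2r pX_gt0. Qed.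

Lemma trunc0 x : trunc p x 0 = 0.
Proof. by rewrite /trunc big_ord0. Qed.

Lemma truncS x k : trunc p x k.+1 = trunc p x k + x k * p ^ k.
Proof. by rewrite /trunc big_ord_recr. Qed.

Lemma truncD x t j :
  trunc p x (t + j) = trunc p x t + p ^ t * trunc p (fun i => x (i + t)) j.
Proof.
elim: j => [|j IH]; first by rewrite addn0 trunc0 muln0 addn0.
by rewrite addnS !truncS IH mulnDr addnA expnD [j + t]addnC mulnCA.
Qed.

Lemma trunc_lt x k : isZp p x -> trunc p x k < p ^ k.
Proof.
move=> Zx; elim: k => [|k IH]; first by rewrite trunc0.
rewrite truncS expnS [x k * _]mulnC; apply: (@leq_trans (p ^ k * (x k).+1)).
  by rewrite mulnS ltn_add2r.
by rewrite mulnC leq_mul2r (Zx k) orbT.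
Qed.

Lemma trunc_mod x j k : isZp p x -> j <= k -> trunc p x k %% p ^ j = trunc p x j.
Proof.
move=> Zx jk; rewrite -(subnKC jk) truncD addnC mulnC modnMDl.
by rewrite modn_small // trunc_lt.
Qed.

Lemma trunc_eq_digit x y k : isZp p x -> isZp p y ->
  trunc p x k = trunc p y k -> forall i, i < k -> x i = y i.
Proof.
move=> Zx Zy E i ik.
have Ej j : j <= k -> trunc p x j = trunc p y j.
  by move=> jk; rewrite -(trunc_mod Zx jk) -(trunc_mod Zy jk) E.
have := Ej _ ik; rewrite !truncS (Ej _ (ltnW ik)) => /addnI /eqP.
by rewrite eqn_pmul2r // => /eqP.
Qed.

Lemma trunc_zeroZp x k : zeroZp x -> trunc p x k = 0.
Proof. by move=> x0; rewrite /trunc big1 // => i _; rewrite x0. Qed.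

Lemma trunc_eq0 x k : isZp p x -> trunc p x k = 0 -> forall i, i < k -> x i = 0.
Proof.
move=> Zx x0; apply: (@trunc_eq_digit x (fun _ => 0)) => //.
by rewrite x0 trunc_zeroZp.
Qed.

Lemma isZp_emb m : isZp p (emb p m).
Proof. by move=> i; rewrite /emb /digit ltn_pmod. Qed.

Lemma trunc_emb m k : trunc p (emb p m) k = m %% p ^ k.
Proof.
elim: k => [|k IH]; first by rewrite trunc0 expn0 modn1.
rewrite truncS IH /emb /digit modn_divl expnS.
have -> : m %% p ^ k = m %% (p * p ^ k) %% p ^ k by rewrite modn_dvdm // dvdn_mull.
by rewrite addnC -divn_eq.
Qed.

Lemma digit_mod m k i : i < k -> digit p (m %% p ^ k) i = digit p m i.
Proof.
move=> ik; apply: (trunc_eq_digit (isZp_emb _) (isZp_emb _) _ ik).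
by rewrite !trunc_emb modn_mod.
Qed.

Lemma trunc_zsub x y k : isZp p x -> isZp p y ->
  trunc p (zsub p x y) k = (trunc p x k + p ^ k - trunc p y k) %% p ^ k.
Proof.
move=> Zx Zy; elim: k => [|k IH]; first by rewrite trunc0 expn0 modn1.
rewrite truncS IH {1}/zsub.
set a := trunc p x k.+1 + p ^ k.+1 - trunc p y k.+1.
suff -> : (trunc p x k + p ^ k - trunc p y k) %% p ^ k = (a %% p ^ k.+1) %% p ^ k.
  by rewrite addnC -divn_eq.
rewrite modn_dvdm; last by rewrite dvdn_exp2l.
have ea : a = (trunc p x k + p ^ k - trunc p y k) + (x k + (p - 1 - y k)) * p ^ k.
  rewrite /a !truncS.
  have ltT := trunc_lt k Zy; have lty := Zy k.
  have ep : p = y k + 1 + (p - 1 - y k) by lia.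
  rewrite expnS {3}ep !mulnDl mul1n.
  set P := p ^ k in ltT *.
  set X := trunc p x k in ltT *; set Y := trunc p y k in ltT *.
  set A := x k * P; set B := y k * P; set Z := (p - 1 - y k) * P; clear ep; lia.
by rewrite ea [X in _ = X %% _]addnC modnMDl.
Qed.

Lemma trunc_zsubK x y k : isZp p x -> isZp p y ->
  trunc p x k = (trunc p y k + trunc p (zsub p x y) k) %% p ^ k.
Proof.
move=> Zx Zy; have ltx := trunc_lt k Zx; have lty := trunc_lt k Zy.
rewrite trunc_zsub // modnDmr.
have -> : trunc p y k + (trunc p x k + p ^ k - trunc p y k) = trunc p x k + p ^ k by lia.
by rewrite modnDr modn_small.
Qed.

End Truncation.
Section Levels.
Variable p : nat.
Hypothesis p_gt1 : 1 < p.
Let p_gt0 : 0 < p. Proof. exact: ltnW. Qed.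
Let pX_gt0 k : 0 < p ^ k. Proof. by rewrite expn_gt0 p_gt0. Qed.
Let pX_eq0 k : (p ^ k == 0) = false. Proof. by rewrite eqn0Ngt pX_gt0. Qed.
Variable Phi : nat -> nat.
Hypothesis Phi_inc : forall n, Phi n < Phi n.+1.

Local Notation P n := (p ^ (Phi n).+1).

Lemma Phi_mono : {homo Phi : m n / m <= n}.
Proof. exact: homo_leq leqnn leq_trans (fun n => ltnW (Phi_inc n)). Qed.

Lemma leq_Phi n : n <= Phi n.
Proof. by elim: n => [//|n IH]; apply: leq_ltn_trans IH (Phi_inc n). Qed.

Lemma P_mono m n : m <= n -> P m <= P n.
Proof. by move=> mn; rewrite leq_exp2l // ltnS Phi_mono. Qed.

Lemma P_dvd m n : m <= n -> P m %| P n.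
Proof. by move=> mn; rewrite dvdn_exp2l // ltnS Phi_mono. Qed.

Lemma tau_block n m : P n <= m -> m < P n.+1 -> tau p Phi m = n.+1.
Proof.
move=> lo hi.
have nm : n.+1 <= m.
  by apply: leq_trans lo; apply: leq_trans (ltnW (ltn_expl _ p_gt1)); rewrite ltnS leq_Phi.
rewrite /tau (_ : iota 0 m.+1 = iota 0 n.+1 ++ iota n.+1 (m - n.+1).+1).
  2: by rewrite -iotaD; congr iota; lia.
rewrite find_cat; case: ifP => [/hasP [i] | _].
  rewrite mem_iota add0n ltnS /= => iN.
  by rewrite ltnNge (leq_trans _ lo) // P_mono.
by rewrite size_iota /= hi addn0.
Qed.

Lemma P_rho x n :
  P n * rho p Phi x n.+1 = \sum_((Phi n).+1 <= i < (Phi n.+1).+1) x i * p ^ i.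
Proof.
rewrite /rho /= big_distrr; apply: eq_big_nat => i /andP [i1 _] /=.
by rewrite mulnCA -expnD subnKC.
Qed.

Lemma trunc_rho x n :
  trunc p x (Phi n.+1).+1 = trunc p x (Phi n).+1 + P n * rho p Phi x n.+1.
Proof.
rewrite P_rho /trunc -!(big_mkord xpredT (fun i => x i * p ^ i)).
by rewrite -big_cat_nat // ltnS ltnW.
Qed.

Lemma Mm_block n m : P n <= m -> m < P n.+1 -> m = m %% P n + Mm p Phi m.
Proof.
move=> lo hi; rewrite /Mm (tau_block lo hi) /= -P_rho.
by have := trunc_rho (emb p m) n; rewrite !trunc_emb // (modn_small hi).
Qed.

Lemma in_block n m r : m < P n -> 0 < r < p ^ (Phi n.+1 - Phi n) ->
  [/\ P n <= m + r * P n, m + r * P n < P n.+1 & (m + r * P n) %% P n = m].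
Proof.
move=> hm /andP [r0 rQ].
have eQ : P n.+1 = p ^ (Phi n.+1 - Phi n) * P n by rewrite -expnD addnS subnK // ltnW.
split.
- by rewrite (leq_trans _ (leq_addl _ _)) // leq_pmull.
- rewrite eQ; apply: (@leq_trans (r.+1 * P n)); first by rewrite mulSn ltn_add2r.
  by rewrite leq_mul2r rQ orbT.
- by rewrite addnC modnMDl modn_small.
Qed.

Variable f : (nat -> nat) -> (nat -> nat).
Hypothesis fF : classF p Phi f.

Lemma isZp_f x : isZp p x -> isZp p (f x).
Proof. by case: fF => fZ _; apply: fZ. Qed.

Lemma trunc_f n x y : 0 < n -> isZp p x -> isZp p y ->
  trunc p x (lev Phi n) = trunc p y (lev Phi n) -> trunc p (f x) n = trunc p (f y) n.
Proof. by case: fF => _ [_ fL] n_gt0 Zx Zy; apply: fL. Qed.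

Let isZp_femb m : isZp p (f (emb p m)).
Proof. exact/isZp_f/isZp_emb. Qed.

Section Block.
Variables (n m0 m : nat).
Hypotheses (m0_lt : m0 < P n) (m_ge : P n <= m) (m_lt : m < P n.+1).
Hypothesis m_mod : m %% P n = m0.

Lemma Bf_block : Bf p Phi f m = zsub p (f (emb p m)) (f (emb p m0)).
Proof.
rewrite /Bf ifF; last by rewrite ltnNge (leq_trans (P_mono (leq0n n)) m_ge).
have e := Mm_block m_ge m_lt; rewrite m_mod in e.
by have -> : m - Mm p Phi m = m0 by rewrite {1}e addnK.
Qed.

Lemma trunc_f_block_low : trunc p (f (emb p m)) n.+1 = trunc p (f (emb p m0)) n.+1.
Proof.
apply: trunc_f (isZp_emb p_gt0 m) (isZp_emb p_gt0 m0) _ => //=.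
by rewrite !trunc_emb m_mod modn_small.
Qed.

Lemma trunc_f_block j :
  trunc p (f (emb p m)) (n.+1 + j) =
  (trunc p (f (emb p m0)) (n.+1 + j) + p ^ n.+1 * trunc p (bf p Phi f m) j)
    %% p ^ (n.+1 + j).
Proof.
have Bfn : trunc p (Bf p Phi f m) n.+1 = 0.
  by rewrite Bf_block trunc_zsub // trunc_f_block_low addKn modnn.
rewrite (trunc_zsubK p_gt0 _ (isZp_femb m) (isZp_femb m0)) -Bf_block.
by rewrite (truncD p (Bf p Phi f m)) Bfn add0n /bf (tau_block m_ge m_lt).
Qed.

Lemma trunc_f_block_eq j : trunc p (bf p Phi f m) j = 0 ->
  trunc p (f (emb p m)) (n.+1 + j) = trunc p (f (emb p m0)) (n.+1 + j).
Proof.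
by move=> b0; rewrite trunc_f_block b0 muln0 addn0 modn_small // trunc_lt.
Qed.

End Block.
Variables (h n0 u : nat) (S : nat -> seq nat).
Hypothesis S_spec : forall n, n0 <= n ->
  [/\ uniq (S n), size (S n) = p - 1 &
      forall i, i \in S n -> 0 < i < p ^ (Phi n.+1 - Phi n)].
Hypothesis b_perm : forall n m, n0 <= n -> m < P n -> m = u %[mod P n0] ->
  [seq trunc p (bf p Phi f (m + i * P n)) h.+1 | i <- S n]
    =i [seq i * p ^ h %% p ^ h.+1 | i <- iota 1 (p - 1)].

Definition bres n m r := trunc p (bf p Phi f (m + r * P n)) h.+1.

Definition lifts n m r := trunc p (f (emb p (m + r * P n))) (n.+1 + h.+1) == 0.

Section Residues.
Variables (n m0 : nat).
Hypotheses (n0_le : n0 <= n) (m0_lt : m0 < P n) (m0_u : m0 = u %[mod P n0]).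

Let b_perm_n := b_perm n0_le m0_lt m0_u.

Lemma bres_surj j : 0 < j < p -> exists2 r, r \in S n & bres n m0 r = j * p ^ h.
Proof.
move=> /andP [j0 jp].
have : j * p ^ h %% p ^ h.+1 \in [seq i * p ^ h %% p ^ h.+1 | i <- iota 1 (p - 1)].
  by apply: map_f; rewrite mem_iota j0 /=; lia.
rewrite -b_perm_n => /mapP [r rS E].
by exists r => //; rewrite /bres -E mulnX_modS.
Qed.

Lemma bres_range r : r \in S n -> exists2 j, 0 < j < p & bres n m0 r = j * p ^ h.
Proof.
move=> rS.
have : bres n m0 r \in [seq i * p ^ h %% p ^ h.+1 | i <- iota 1 (p - 1)].
  by rewrite -b_perm_n; apply: map_f.
case/mapP=> j; rewrite mem_iota => jr ->.
by exists j; [lia | rewrite mulnX_modS //; lia].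
Qed.

Lemma bres_inj : {in S n &, injective (bres n m0)}.
Proof.
have [S_uniq S_size _] := S_spec n0_le.
apply: uniq_map_inj.
have res_uniq : uniq [seq i * p ^ h %% p ^ h.+1 | i <- iota 1 (p - 1)].
  rewrite map_inj_in_uniq ?iota_uniq // => i j.
  rewrite !mem_iota => ip jp; rewrite !mulnX_modS; try lia.
  by move/eqP; rewrite eqn_pmul2r // => /eqP.
rewrite (uniq_size_uniq res_uniq (fun x => esym (b_perm_n x))).
by rewrite !size_map size_iota S_size.
Qed.

Hypothesis m0_root : trunc p (f (emb p m0)) (n.+1 + h) = 0.

Let a := f (emb p m0) (n.+1 + h).

Let a_lt : a < p. Proof. exact: isZp_femb. Qed.

Lemma lifts0 : lifts n m0 0 = (a == 0).
Proof.
by rewrite /lifts mul0n addn0 addnS truncS m0_root add0n muln_eq0 pX_eq0 orbF.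
Qed.

Lemma liftsS r j : r \in S n -> bres n m0 r = j * p ^ h ->
  lifts n m0 r = ((a + j) %% p == 0).
Proof.
move=> rS bj; have [_ _ S_range] := S_spec n0_le.
have [lo hi em] := in_block m0_lt (S_range r rS).
rewrite /lifts (trunc_f_block m0_lt lo hi em) -/(bres n m0 r) bj.
rewrite addnS truncS m0_root add0n mulnCA -expnD -mulnDl expnSr [_ * p]mulnC.
by rewrite -muln_modl muln_eq0 pX_eq0 orbF.
Qed.

Lemma lifts_cases r : r \in 0 :: S n -> lifts n m0 r ->
  (r = 0 /\ a = 0) \/ [/\ r \in S n, 0 < a & bres n m0 r = (p - a) * p ^ h].
Proof.
rewrite inE => /predU1P [-> | rS]; first by rewrite lifts0 => /eqP; left.
have [j /andP [j0 jp] bj] := bres_range rS.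
rewrite (liftsS rS bj) => /eqP ajp; right.
have aj : a + j = p.
  case: (ltnP (a + j) p) => [lt | le]; first by move: ajp; rewrite modn_small //; lia.
  by move: ajp; rewrite -(subnK le) modnDr modn_small; lia.
by split=> //; [lia | rewrite bj; congr (_ * _); lia].
Qed.

Lemma has_lifts : has (lifts n m0) (0 :: S n).
Proof.
have [a0 | a_gt0] := posnP a; first by rewrite /= lifts0 a0.
have [r rS bj] := @bres_surj (p - a) ltac:(lia).
apply/hasP; exists r; first by rewrite inE rS orbT.
by rewrite (liftsS rS bj) subnKC ?modnn // ltnW.
Qed.

Lemma lifts_unique :
  {in 0 :: S n &, forall r1 r2, lifts n m0 r1 -> lifts n m0 r2 -> r1 = r2}.
Proof.
move=> r1 r2 r1S r2S l1 l2.
case: (lifts_cases r1S l1) (lifts_cases r2S l2) => [[-> a0] | [r1S' a_gt0 b1]].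
  by case=> [[-> //] | [_ a_gt0 _]]; move: a_gt0; rewrite a0.
case=> [[_ a0] | [r2S' _ b2]]; first by move: a_gt0; rewrite a0.
by apply: bres_inj; rewrite // b1 b2.
Qed.

End Residues.
Hypothesis u_lt : u < P n0.
Hypothesis u_root : trunc p (f (emb p u)) (1 + h + n0) = 0.

Definition next_approx n m :=
  m + nth 0 (0 :: S n) (find (lifts n m) (0 :: S n)) * P n.

Fixpoint approx j := if j is j'.+1 then next_approx (n0 + j') (approx j') else u.

Lemma next_approx_spec n m : n0 <= n -> m < P n -> m = u %[mod P n0] ->
  trunc p (f (emb p m)) (n.+1 + h) = 0 ->
  exists2 r, r \in 0 :: S n & [/\ next_approx n m = m + r * P n, lifts n m r &
                                  r < p ^ (Phi n.+1 - Phi n)].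
Proof.
move=> n0_le m_lt m_u m_root.
have l_has := has_lifts n0_le m_lt m_u m_root.
set r := nth 0 (0 :: S n) (find (lifts n m) (0 :: S n)).
have rS : r \in 0 :: S n by rewrite mem_nth // -has_find.
exists r => //; split => //; first exact: nth_find.
move: rS; rewrite inE => /predU1P [-> | rS]; first exact: pX_gt0.
by have [_ _ S_range] := S_spec n0_le; case/andP: (S_range r rS).
Qed.

Lemma approx_spec j : [/\ approx j < P (n0 + j), approx j = u %[mod P n0] &
  trunc p (f (emb p (approx j))) ((n0 + j).+1 + h) = 0].
Proof.
elim: j => [|j [m_lt m_u m_root]].
  by rewrite addn0 /=; split => //; rewrite -u_root; congr trunc; lia.
have [r rS [e lr r_lt]] := next_approx_spec (leq_addr j n0) m_lt m_u m_root.
rewrite /= e addnS; split.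
- have [-> | r_gt0] := posnP r; first by rewrite mul0n addn0 (leq_trans m_lt) // P_mono.
  by have [_ -> _] := in_block m_lt (introT andP (conj r_gt0 r_lt)).
- have /dvdnP [c eP] := P_dvd (leq_addr j n0).
  by rewrite -m_u eP mulnA addnC modnMDl.
- by rewrite addSn -addnS; apply/eqP.
Qed.

Lemma approx_step j : exists2 r, r \in 0 :: S (n0 + j) &
  approx j.+1 = approx j + r * P (n0 + j).
Proof.
have [m_lt m_u m_root] := approx_spec j.
by have [r rS [e _ _]] := next_approx_spec (leq_addr j n0) m_lt m_u m_root; exists r.
Qed.

Lemma approx_mod i j : i <= j -> approx j %% P (n0 + i) = approx i.
Proof.
move=> ij; rewrite -(subnKC ij); elim: (j - i) => [|k IH].
  by rewrite addn0 modn_small //; case: (approx_spec i).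
rewrite addnS; have [r _ ->] := approx_step (i + k).
have := P_dvd (leq_addr k (n0 + i)); rewrite -addnA => /dvdnP [c ->].
by rewrite mulnA addnC modnMDl.
Qed.

Definition root k := digit p (approx k) k.

Lemma isZp_root : isZp p root.
Proof. by move=> i; rewrite /root /digit ltn_pmod. Qed.

(* Digit [i] of [approx j] is frozen from step [i] on, since [i < 1 + Phi (n0 + i)]. *)
Lemma trunc_root j : trunc p root (Phi (n0 + j)).+1 = approx j.
Proof.
have [m_lt _ _] := approx_spec j.
rewrite -(modn_small m_lt) -trunc_emb //; apply: eq_bigr => [[i i_lt]] _ /=.
have i_lev k : i <= k -> i < (Phi (n0 + k)).+1.
  by move=> ik; rewrite ltnS (leq_trans ik) // (leq_trans (leq_addl n0 k)) // leq_Phi.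
rewrite /root /emb; case: (leqP i j) => ij.
  by rewrite -(approx_mod ij) digit_mod // i_lev.
by rewrite -(approx_mod (ltnW ij)) digit_mod.
Qed.

Lemma exists_root : exists xi, [/\ isZp p xi, zeroZp (f xi),
  trunc p xi (Phi n0).+1 = u %% P n0 &
  forall n, n0 <= n -> rho p Phi xi n.+1 \in 0 :: S n].
Proof.
exists root; split.
- exact: isZp_root.
- move=> i; have [m_lt _ m_root] := approx_spec i.
  have f_root : trunc p (f root) (n0 + i).+1 = 0.
    rewrite (trunc_f _ isZp_root (isZp_emb p_gt0 (approx i))) //=.
      by rewrite -(trunc_mod p_gt0 (isZp_femb _) (leq_addr h _)) m_root mod0n.
    by rewrite trunc_root trunc_emb modn_small.
  by apply: (trunc_eq0 p_gt0 (isZp_f isZp_root) f_root); rewrite ltnS leq_addl.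
- by have := trunc_root 0; rewrite addn0 => ->; rewrite modn_small.
- move=> n n0_le; rewrite -(subnKC n0_le).
  have := trunc_rho root (n0 + (n - n0)); rewrite -addnS !trunc_root.
  have [r rS ->] := approx_step (n - n0).
  by move/addnI/eqP; rewrite mulnC eqn_pmul2l // => /eqP <-.
Qed.

Hypothesis b_low : forall m, P n0 <= m -> m = u %[mod P n0] ->
  trunc p (bf p Phi f m) h = 0.

Section RootTruncations.
Variable x : nat -> nat.
Hypotheses (x_Zp : isZp p x) (x_root : zeroZp (f x)).
Hypothesis x_u : trunc p x (Phi n0).+1 = u %% P n0.

Local Notation xt N := (trunc p x (Phi N).+1).

Lemma trunc_u N : n0 <= N -> xt N = u %[mod P n0].
Proof. by move=> N_ge; rewrite -x_u trunc_mod // ltnS Phi_mono. Qed.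

Lemma f_trunc_next N : n0 <= N ->
  trunc p (f (emb p (xt N.+1))) (N.+1 + h) = trunc p (f (emb p (xt N))) (N.+1 + h).
Proof.
move=> N_ge; have e := trunc_rho x N.
have [rho0 | rho_gt0] := posnP (rho p Phi x N.+1); first by rewrite e rho0 muln0 addn0.
have lo : P N <= xt N.+1 by rewrite e (leq_trans _ (leq_addl _ _)) // leq_pmulr.
apply: (trunc_f_block_eq (trunc_lt p_gt0 _ x_Zp) lo (trunc_lt p_gt0 _ x_Zp)).
  by rewrite trunc_mod // ltnS ltnW.
by apply: b_low; [rewrite (leq_trans _ lo) // P_mono | apply: trunc_u; apply: leqW].
Qed.

Lemma f_trunc_stable n N : n0 <= n -> n <= N ->
  trunc p (f (emb p (xt N))) (n.+1 + h) = trunc p (f (emb p (xt n))) (n.+1 + h).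
Proof.
move=> n_ge nN; rewrite -(subnKC nN); elim: (N - n) => [|k IH]; first by rewrite addn0.
have le : n.+1 + h <= (n + k).+1 + h by rewrite leq_add2r ltnS leq_addr.
rewrite addnS -(trunc_mod p_gt0 (isZp_femb _) le) f_trunc_next ?(leq_trans n_ge) ?leq_addr //.
by rewrite (trunc_mod p_gt0 (isZp_femb _) le).
Qed.

Lemma f_trunc_root n : n0 <= n -> trunc p (f (emb p (xt n))) (n.+1 + h) = 0.
Proof.
move=> n_ge; rewrite -(f_trunc_stable n_ge (leq_addr h n)) -(@trunc_zeroZp p _ (n.+1 + h) x_root).
rewrite addSn; apply: trunc_f (isZp_emb p_gt0 _) x_Zp _ => //=.
by rewrite trunc_emb modn_small // trunc_lt.
Qed.

Lemma lifts_rho n : n0 <= n -> lifts n (xt n) (rho p Phi x n.+1).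
Proof.
move=> n_ge; rewrite /lifts mulnC -trunc_rho -addSnnS.
by apply/eqP; apply: f_trunc_root; apply: leqW.
Qed.

End RootTruncations.

Lemma root_unique x y :
  isZp p x -> zeroZp (f x) -> trunc p x (Phi n0).+1 = u %% P n0 ->
  (forall n, n0 <= n -> rho p Phi x n.+1 \in 0 :: S n) ->
  isZp p y -> zeroZp (f y) -> trunc p y (Phi n0).+1 = u %% P n0 ->
  (forall n, n0 <= n -> rho p Phi y n.+1 \in 0 :: S n) ->
  forall i, x i = y i.
Proof.
move=> x_Zp x_root x_u x_S y_Zp y_root y_u y_S.
have xt_eq j : trunc p x (Phi (n0 + j)).+1 = trunc p y (Phi (n0 + j)).+1.
  elim: j => [|j IH]; first by rewrite addn0 x_u y_u.
  have n_ge := leq_addr j n0.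
  rewrite addnS !trunc_rho -IH; congr (_ + _ * _).
  apply: (lifts_unique n_ge (trunc_lt p_gt0 _ x_Zp) (trunc_u x_Zp x_u n_ge)
            (f_trunc_root x_Zp x_root x_u n_ge)); [exact: x_S | exact: y_S | |].
    exact: lifts_rho.
  by rewrite IH; apply: lifts_rho.
move=> i; apply: (trunc_eq_digit p_gt0 x_Zp y_Zp (xt_eq i)).
by rewrite ltnS (leq_trans (leq_addl n0 i)) // leq_Phi.
Qed.

End Levels.

Theorem theorem2 (p : nat) (Phi : nat -> nat) (f : (nat -> nat) -> (nat -> nat))
  (h n0 u : nat) (S : nat -> seq nat) :
  prime p ->
  (forall n, Phi n < Phi n.+1) ->
  classF p Phi f ->
  u < p ^ (Phi n0).+1 ->
  trunc p (f (emb p u)) (1 + h + n0) = 0 ->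
  (forall n, n0 <= n ->
     [/\ uniq (S n), size (S n) = p - 1 &
         forall i, i \in S n -> 0 < i < p ^ (Phi n.+1 - Phi n)]) ->
  (forall n m, n0 <= n -> m < p ^ (Phi n).+1 ->
     m = u %[mod p ^ (Phi n0).+1] ->
     [seq trunc p (bf p Phi f (m + i * p ^ (Phi n).+1)) h.+1 | i <- S n]
       =i [seq i * p ^ h %% p ^ h.+1 | i <- iota 1 (p - 1)]) ->
  (exists xi, [/\ isZp p xi,
       zeroZp (f xi),
       trunc p xi (Phi n0).+1 = u %% p ^ (Phi n0).+1 &
       forall n, n0 <= n -> rho p Phi xi n.+1 \in 0 :: S n])
  /\
  ((forall m, p ^ (Phi n0).+1 <= m -> m = u %[mod p ^ (Phi n0).+1] ->
      trunc p (bf p Phi f m) h = 0) ->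
   forall xi1 xi2,
     isZp p xi1 -> zeroZp (f xi1) -> trunc p xi1 (Phi n0).+1 = u %% p ^ (Phi n0).+1 ->
     (forall n, n0 <= n -> rho p Phi xi1 n.+1 \in 0 :: S n) ->
     isZp p xi2 -> zeroZp (f xi2) -> trunc p xi2 (Phi n0).+1 = u %% p ^ (Phi n0).+1 ->
     (forall n, n0 <= n -> rho p Phi xi2 n.+1 \in 0 :: S n) ->
     forall i, xi1 i = xi2 i).
Proof.
move=> p_prime Phi_inc fF u_lt u_root S_spec b_perm.
have p_gt1 := prime_gt1 p_prime.
split; first exact: (exists_root p_gt1 Phi_inc fF S_spec b_perm u_lt u_root).
by move=> b_low; apply: (root_unique p_gt1 Phi_inc fF S_spec b_perm b_low).
Qed.
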